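(* Let $r\in\mathbb{N}$ with $r\ge2$, let $v\in\mathbb{YF}^{r,+}_\infty$, $\beta\in(0,1]$ and $\delta>0$. Then $$\lim_{m\to\infty}\sum_{w\in\overline{R}(r,v,\beta,m,\delta)}\mu_{r,v,\beta}(w)=0,$$ where $\overline{R}(r,v,\beta,m,\delta)=\{w\in\mathbb{YF}^r:\ |w|=m,\ \pi(w)\notin(\pi(v)(\beta-\delta),\pi(v)(\beta+\delta))\}$.
   Context: Fix $r\in\mathbb{N}$. Words and statistics. Consider finite words over $\{1_1,\dots,1_r,2\}$. A letter $1_i$ is a one with digit value $1$; $2$ is a two with digit value $2$. $\varepsilon$ is the empty word. For a word $x$, $|x|$ is the sum of digit values, $e(x)$ the number of ones, $d(x)$ the number of twos. The graph $\mathbb{YF}^r$. It is the graded graph on all finite words, graded by $|\cdot|$. From $x$ there is a downward edge to every word obtained by one of two operations: (i) delete the leftmost one; (ii) replace a $2$ lying left of the leftmost one (any $2$ if there are no ones) by $1_i$, with arbitrary $i$. Path counts. $d_r(x,y)$ is the number of downward paths $y=y_n\to\dots\to y_m=x$ with $|y_i|=i$. Infinite words. $\mathbb{YF}^r_\infty$ is the set of left-infinite words $\dots\alpha_2\alpha_1$. The function $g$. For a finite or infinite word $x$, write $x=\dots2\,1^{\beta_m}\,2\cdots2\,1^{\beta_1}\,2\,1^{\beta_0}$, where $1^{\beta}$ is a possibly empty block of $\beta$ ones. For $1\le j\le d(x)$ set $g(x,j)=\beta_0+\dots+\beta_{j-1}+2j-1$. The function $\pi$. Set $\pi(x)=\prod_{j:\,g(x,j)>1}\frac{g(x,j)-1}{g(x,j)}$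 and $\mathbb{YF}^{r,+}_\infty=\{v\in\mathbb{YF}^r_\infty:\pi(v)>0\}$. Letterwise convergence. $v_n\to v$ letterwise means: for every $k$ and all large $n$, the last $k$ letters of $v_n$ coincide with the last $k$ letters of $v$. The measures $\mu_{r,v,\beta}$. For $v\in\mathbb{YF}^{r,+}_\infty$ and $\beta\in(0,1]$ there exist sequences of finite words $v_n\to v$ letterwise with $\pi(v_n)\to\beta\pi(v)$. For every such sequence and every $w\in\mathbb{YF}^r$, the limit $\lim_n d_r(\varepsilon,w)\,d_r(w,v_n)/d_r(\varepsilon,v_n)$ exists and depends only on $w,v,\beta$ (a fact proved in the paper). This limit is denoted $\mu_{r,v,\beta}(w)$. *)

From HB Require Import structures.
From mathcomp Require Import all_boot all_order all_algebra.
From mathcomp Require Import all_classical all_reals all_analysis.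
Set Implicit Arguments. Unset Strict Implicit. Unset Printing Implicit Defensive.
Import Order.TTheory GRing.Theory Num.Theory.
Import numFieldNormedType.Exports.
Local Open Scope ring_scope.
Local Open Scope classical_set_scope.

(* Letters over {1_1,...,1_r,2}: [Some i] is the one 1_(i+1), [None] is the two. *)
Definition letter (r : nat) := option 'I_r.
Definition Two {r} : letter r := None.
Definition One {r} (i : 'I_r) : letter r := Some i.
Definition isOne {r} (a : letter r) : bool := a != None.

(* Finite words, written left to right: [:: a_1; ...; a_k] is the word a_1...a_k. *)
Definition word (r : nat) := seq (letter r).

Definition digit {r} (a : letter r) : nat := if a is None then 2 else 1.
Definition weight {r} (x : word r) : nat := sumn (map digit x).
Definition eones {r} (x : word r) : nat := count isOne x.
Definition dtwos {r} (x : word r) : nat := count (fun a => ~~ isOne a) x.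

(* Downward neighbours in YF^r:
   (i) delete the leftmost one;
   (ii) replace a 2 lying left of the leftmost one (any 2 if there are no
        ones) by 1_i.  Every position left of the leftmost one holds a 2. *)
Definition down {r} (y : word r) : seq (word r) :=
  let p := find isOne y in
  (if (p < size y)%N then [:: take p y ++ drop p.+1 y] else [::]) ++
  [seq set_nth Two y q (One i) | q <- iota 0 p, i <- enum 'I_r].

Fixpoint dpaths {r} (k : nat) (x y : word r) : nat :=
  match k with
  | 0 => nat_of_bool (x == y)
  | k'.+1 => sumn [seq dpaths k' x z | z <- down y]
  end.

Definition dr {r} (x y : word r) : nat :=
  if (weight x <= weight y)%N then dpaths (weight y - weight x) x y else 0.

(* Block exponents: for x = ... 2 1^{b_m} 2 ... 2 1^{b_1} 2 1^{b_0},
   blocks_rev (rev x) = [:: b_0; b_1; ...; b_{d(x)}]. *)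
Fixpoint blocks_rev {r} (s : word r) : seq nat :=
  match s with
  | [::] => [:: 0]
  | None :: s' => 0 :: blocks_rev s'
  | Some _ :: s' => match blocks_rev s' with
                    | [::] => [:: 1]
                    | b :: bs => b.+1 :: bs
                    end
  end.
Definition beta_blk {r} (x : word r) (k : nat) : nat := nth 0 (blocks_rev (rev x)) k.

Definition gfun {r} (x : word r) (j : nat) : nat :=
  (\sum_(k < j) beta_blk x k + 2 * j - 1)%N.

Definition piw (R : realType) {r} (x : word r) : R :=
  \prod_(1 <= j < (dtwos x).+1 | (1 < gfun x j)%N)
     (((gfun x j)%:R - 1) / (gfun x j)%:R).

(* Left-infinite words ... a_2 a_1 are represented by v : nat -> letter r with
   v k = a_(k+1).  sfx v N is the finite word a_N ... a_1 (the last N letters). *)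
Definition infword (r : nat) := nat -> letter r.
Definition sfx {r} (v : infword r) (N : nat) : word r := rev (mkseq v N).

(* For infinite v, pi(v) is the infinite product, i.e. the limit of the
   (nonincreasing, [0,1]-valued) partial products; since g(v,j) only depends
   on letters right of the j-th two, these are the pi of the suffixes. *)
Definition piInf (R : realType) {r} (v : infword r) : R :=
  limn (fun N => piw R (sfx v N)).

Definition letterwise_cvg {r} (vs : nat -> word r) (v : infword r) : Prop :=
  forall k : nat, \forall n \near \oo, take k (rev (vs n)) = mkseq v k.

Definition is_mu (R : realType) {r} (v : infword r) (beta : R)
    (mu : word r -> R) : Prop :=
  exists vs : nat -> word r,
    letterwise_cvg vs v /\
    (fun n => piw R (vs n)) @ \oo --> beta * piInf R v /\
    forall w : word r,
      (fun n => ((dr [::] w)%:R * (dr w (vs n))%:R / (dr [::] (vs n))%:R : R))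
        @ \oo --> mu w.

(* Let dim y := d(eps, y).  The dims of the children of y sum to dim y, so
   weighting the words t of weight m by dim t * d(t, y) / dim y gives the law
   at weight m of the random downward walk from y that steps to a child z with
   probability dim z / dim y.  Along this walk pi is a submartingale (the
   average of pi over the children of y is at least pi y), and its one-step
   conditional variance at weight k is at most 4 / (k sqrt (k - 1)), a series
   whose tail beyond m is at most 8 / sqrt (m - 1).  Hence, for c >= 0, the
   mean of (pi - c)^2 at weight m is at most (pi y - c)^2 + 8 / sqrt (m - 1),
   and by Chebyshev the walk ends outside (c - eta, c + eta) with probability
   at most that over eta^2.  For the words v_n defining mu, pi v_n tends to
   c = beta pi v, so the mu-mass of the far words of weight m is at most
   8 / (eta^2 sqrt (m - 1)), which tends to 0. *)

From Pilot Require Import Defs.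
From HB Require Import structures.
From mathcomp Require Import all_boot all_order all_algebra.
From mathcomp Require Import all_classical all_reals all_analysis.
From mathcomp Require Import zify ring lra.
Import Order.TTheory GRing.Theory Num.Theory.
Import numFieldNormedType.Exports.
Set Implicit Arguments. Unset Strict Implicit. Unset Printing Implicit Defensive.

(* [all_classical] exports another [down]. *)
Local Notation down := Defs.down.

Section Graph.
Variable r : nat.
Implicit Types (t y z : word r).

Lemma down_nil : down ([::] : word r) = [::].
Proof. by []. Qed.

Lemma down_cons_one (c : 'I_r) y : down (One c :: y) = [:: y].
Proof. by rewrite /down /= drop0. Qed.

Lemma perm_down_cons_two y :
  perm_eq (down (Two :: y))
          ([seq Two :: z | z <- down y] ++ [seq One i :: y | i <- enum 'I_r]).
Proof.
rewrite /down /= ltnS -(addn0 1) iotaDl /= map_cat -catA.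
apply: perm_cat; first by case: ifP.
rewrite perm_catC perm_cat2r map_flatten -!map_comp.
set s := flatten _; set t := flatten _.
suff -> : s = t by [].
by apply: (congr1 flatten); apply: eq_map => q /=; rewrite add0n -[RHS]map_comp.
Qed.

Lemma big_down_cons_two (T : Type) (idx : T) (op : Monoid.com_law idx) y
    (F : word r -> T) :
  \big[op/idx]_(z <- down (Two :: y)) F z =
  op (\big[op/idx]_(z <- down y) F (Two :: z))
     (\big[op/idx]_(i <- enum 'I_r) F (One i :: y)).
Proof. by rewrite (perm_big _ (perm_down_cons_two y)) big_cat !big_map. Qed.

Lemma weight_cons (a : letter r) y : weight (a :: y) = digit a + weight y.
Proof. by []. Qed.

Lemma weight_eq0 y : (weight y == 0) = (y == [::]).
Proof. by case: y => // [[c|] y]. Qed.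

Lemma weight_eq1 y : weight y = 1 -> exists c, y = [:: One c].
Proof.
case: y => [|[c|] y] //; rewrite weight_cons /= => /eqP.
by rewrite eqSS weight_eq0 => /eqP ->; exists c.
Qed.

Lemma weight_down y z : z \in down y -> (weight z).+1 = weight y.
Proof.
elim: y z => [|[c|] y IH] z; first by rewrite down_nil.
  by rewrite down_cons_one inE => /eqP ->.
rewrite (perm_mem (perm_down_cons_two y)) mem_cat.
by case/orP => /mapP[z' z'y ->] //; rewrite !weight_cons -(IH z').
Qed.

Lemma size_le_weight y : (size y <= weight y).
Proof. by elim: y => [|[c|] y IH] //=; rewrite weight_cons /=; lia. Qed.

Fixpoint dimw y : nat :=
  match y with
  | [::] => 1
  | Some _ :: y' => dimw y'
  | None :: y' => r * (weight y').+1 * dimw y'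
  end.

Lemma dimw_gt0 y : 0 < r -> 0 < dimw y.
Proof. by move=> r_gt0; elim: y => [|[c|] y IH] //=; rewrite !muln_gt0 r_gt0. Qed.

Lemma sum_dimw_down y : y != [::] -> (\sum_(z <- down y) dimw z) = dimw y.
Proof.
elim: y => [|[c|] y IH] // _; first by rewrite down_cons_one big_seq1.
rewrite big_down_cons_two /= big_const_seq count_predT size_enum_ord iter_addn_0.
have [->|ne_y] := eqVneq y [::]; first by rewrite down_nil big_nil /weight /=; lia.
rewrite (eq_big_seq (fun z => r * weight y * dimw z)); last first.
  by move=> z /weight_down <-.
by rewrite -big_distrr /= IH //; lia.
Qed.

Lemma dr_nil y : dr [::] y = dimw y.
Proof.
rewrite /dr subn0; move wy: (weight y) => n.
elim: n y wy => [|n IH] y wy; first by move/eqP: wy; rewrite weight_eq0 => /eqP ->.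
have ne_y : y != [::] by rewrite -weight_eq0 wy.
rewrite /= sumnE big_map -(sum_dimw_down ne_y); apply: eq_big_seq => z /weight_down.
by rewrite wy => -[/IH].
Qed.

Lemma dr_down t y : (weight t < weight y) ->
  dr t y = (\sum_(z <- down y) dr t z).
Proof.
move=> lt_ty; rewrite /dr (ltnW lt_ty).
have -> : (weight y - weight t = (weight y - weight t).-1.+1) by lia.
rewrite /= sumnE big_map; apply: eq_big_seq => z /weight_down wz.
have -> : (weight t <= weight z) by lia.
by congr dpaths; lia.
Qed.

Lemma dr_weight_eq t y : weight t = weight y -> dr t y = (t == y) :> nat.
Proof. by move=> e; rewrite /dr e leqnn subnn. Qed.

Lemma dr_weight_gt t y : (weight y < weight t) -> dr t y = 0.
Proof. by move=> lt; rewrite /dr leqNgt lt. Qed.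

End Graph.

Section Blocks.
Variable r : nat.
Implicit Types (s y : word r).

Lemma size_blocks_rev s : size (blocks_rev s) = (count (fun a => ~~ isOne a) s).+1.
Proof. by elim: s => [|[c|] s IH] //=; move: IH; case: (blocks_rev s) => //= b bs ->. Qed.

Lemma blocks_rev_cons_one (c : 'I_r) s :
  blocks_rev (One c :: s) = (head 0 (blocks_rev s)).+1 :: behead (blocks_rev s).
Proof. by have := size_blocks_rev s; rewrite /=; case: (blocks_rev s). Qed.

Lemma sumn_blocks_rev s : sumn (blocks_rev s) = count isOne s.
Proof.
elim: s => [|[c|] s IH] //; rewrite ?blocks_rev_cons_one //=.
by have := size_blocks_rev s; move: IH; case: (blocks_rev s) => //= b bs <-.
Qed.

Lemma blocks_rev_rcons_two s : blocks_rev (rcons s Two) = rcons (blocks_rev s) 0.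
Proof.
elim: s => [|[c|] s IH] //; last by rewrite rcons_cons /= IH.
rewrite rcons_cons -[Some c]/(One c) !blocks_rev_cons_one IH.
by have := size_blocks_rev s; case: (blocks_rev s).
Qed.

Lemma nth_blocks_rev_rcons s a k : (k < count (fun a => ~~ isOne a) s) ->
  nth 0 (blocks_rev (rcons s a)) k = nth 0 (blocks_rev s) k.
Proof.
elim: s k => [|[c|] s IH] k //; last by case: k => //= k /IH.
rewrite rcons_cons -[Some c]/(One c) !blocks_rev_cons_one.
by case: k => [|k] /IH /=; rewrite -?nth0 -?nth_behead => ->.
Qed.

Lemma weight_eones y : weight y = (eones y + 2 * dtwos y).
Proof.
elim: y => [|[c|] y IH] //;
  by rewrite weight_cons /eones /dtwos /= -/(eones y) -/(dtwos y) IH /=; lia.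
Qed.

Lemma gfun_cons (a : letter r) y j : (j <= dtwos y) -> gfun (a :: y) j = gfun y j.
Proof.
move=> le_j; rewrite /gfun; congr (_ + _ - _); apply: eq_bigr => k _.
by rewrite /beta_blk rev_cons nth_blocks_rev_rcons // count_rev (leq_trans _ le_j).
Qed.

Lemma gfun_cons_two_last y : gfun (Two :: y) (dtwos y).+1 = (weight y).+1.
Proof.
have size_b : size (blocks_rev (rev y)) = (dtwos y).+1 by rewrite size_blocks_rev count_rev.
rewrite /gfun /beta_blk rev_cons blocks_rev_rcons_two.
rewrite (eq_bigr (fun k : 'I_(dtwos y).+1 => nth 0 (blocks_rev (rev y)) k)); last first.
  by move=> k _; rewrite nth_rcons size_b ltn_ord.
rewrite -size_b -(big_mkord xpredT (fun k => nth 0 _ k)) -(big_nth 0 xpredT id).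
by rewrite -sumnE sumn_blocks_rev count_rev weight_eones /eones; lia.
Qed.

End Blocks.

Local Open Scope ring_scope.

Lemma moment2_step_ineq (R : realFieldType) (n S s1 s2 : R) :
  2 <= n -> 0 <= S -> s1 ^+ 2 = n - 1 -> s2 ^+ 2 = n + 1 -> 0 < s1 -> 0 < s2 ->
  (n - 1) ^+ 2 / n * (1 + S / s1) + 1 <= n ^+ 2 / (n + 1) * (1 + (S + n ^-2) / s2).
Proof.
move=> n_ge2 S_ge0 s1E s2E s1_gt0 s2_gt0.
have s12_le : s1 * s2 <= n.
  have : (s1 * s2) ^+ 2 = n ^+ 2 - 1 by rewrite exprMn s1E s2E; ring.
  have : 0 < s1 * s2 by rewrite mulr_gt0.
  nra.
have ineq_1 : (n * (n + 1))^-1 <= ((n + 1) * s2)^-1.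
  by rewrite lef_pV2 ?posrE; nra.
have ineq_S : (n - 1) ^+ 2 / (n * s1) <= n ^+ 2 / ((n + 1) * s2).
  rewrite ler_pdivrMr ?mulr_gt0 1?mulrAC ?ler_pdivlMr; try nra.
  have : (s1 * s2) ^+ 3 <= n ^+ 3 by apply: lerXn2r; rewrite ?nnegrE; nra.
  have -> : (n - 1) ^+ 2 = s1 ^+ 4 by rewrite -s1E -exprM.
  rewrite -s2E exprMn; nra.
have -> : (n - 1) ^+ 2 / n * (1 + S / s1) + 1 =
  n ^+ 2 / (n + 1) + ((n * (n + 1))^-1 + (n - 1) ^+ 2 / (n * s1) * S).
  by field; lra.
have -> : n ^+ 2 / (n + 1) * (1 + (S + n ^-2) / s2) =
  n ^+ 2 / (n + 1) + (n ^+ 2 / ((n + 1) * s2) * S + ((n + 1) * s2)^-1).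
  by field; lra.
by rewrite lerD2l addrC lerD // ler_wpM2r.
Qed.

Section Walk.
Variables (R : realType) (r : nat).
Implicit Types (t y z : word r).

Definition pi_factor (n : nat) : R := if (1 < n)%N then (n%:R - 1) / n%:R else 1.

Lemma pi_factor1 : pi_factor 1 = 1. Proof. by []. Qed.

Lemma pi_factor_gt1 n : (1 < n)%N -> pi_factor n = (n%:R - 1) / n%:R.
Proof. by rewrite /pi_factor => ->. Qed.

Lemma pi_factor_ge0 n : 0 <= pi_factor n.
Proof. by rewrite /pi_factor; case: ifP => // n_gt1; rewrite divr_ge0 // subr_ge0 ler1n ltnW. Qed.

Lemma pi_factor_le1 n : pi_factor n <= 1.
Proof.
rewrite /pi_factor; case: ifP => // n_gt1.
by rewrite ler_pdivrMr ?ltr0n ?(ltn_trans _ n_gt1) // mul1r gerBl.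
Qed.

Lemma piwE y : piw R y = \prod_(1 <= j < (dtwos y).+1) pi_factor (gfun y j).
Proof. by rewrite /piw big_mkcond. Qed.

Lemma piw_nil : piw R ([::] : word r) = 1.
Proof. by rewrite piwE big_nil. Qed.

Lemma piw_cons_one (c : 'I_r) y : piw R (One c :: y) = piw R y.
Proof. by rewrite !piwE; apply: eq_big_nat => j /andP[_ lt_j]; rewrite gfun_cons. Qed.

Lemma piw_cons_two y : piw R (Two :: y) = pi_factor (weight y).+1 * piw R y.
Proof.
rewrite !piwE /= add1n big_nat_recr //= gfun_cons_two_last mulrC.
by congr (_ * _); apply: eq_big_nat => j /andP[_ lt_j]; rewrite gfun_cons.
Qed.

Lemma piw_ge0 y : 0 <= piw R y.
Proof. by rewrite piwE prodr_ge0 // => j _; apply: pi_factor_ge0. Qed.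

Lemma piw_le1 y : piw R y <= 1.
Proof. by rewrite piwE prodr_ile1 // => j _; rewrite pi_factor_ge0 pi_factor_le1. Qed.

Definition dimR y : R := (dimw y)%:R.

Definition moment (k : nat) y : R := \sum_(z <- down y) dimR z * piw R z ^+ k.

Lemma dimR_cons_two y : dimR (Two :: y) = r%:R * (weight y).+1%:R * dimR y.
Proof. by rewrite /dimR /= !natrM. Qed.

Lemma sum_dimR_down y : y != [::] -> \sum_(z <- down y) dimR z = dimR y.
Proof. by move=> ne_y; rewrite /dimR -natr_sum sum_dimw_down. Qed.

Lemma moment_cons_one k (c : 'I_r) y : moment k (One c :: y) = dimR y * piw R y ^+ k.
Proof. by rewrite /moment down_cons_one big_seq1. Qed.

Lemma moment_cons_two k y :
  moment k (Two :: y) =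
  r%:R * (weight y)%:R * pi_factor (weight y) ^+ k * moment k y
  + r%:R * (dimR y * piw R y ^+ k).
Proof.
rewrite /moment big_down_cons_two; congr (_ + _); last first.
  rewrite (eq_bigr (fun=> dimR y * piw R y ^+ k)) => [|i _]; last by rewrite piw_cons_one.
  by rewrite big_enum /= sumr_const card_ord mulr_natl.
rewrite mulr_sumr; apply: eq_big_seq => z /weight_down <-.
by rewrite dimR_cons_two piw_cons_two exprMn; ring.
Qed.

Lemma natr_mul_pi_factor n : (1 < n)%N -> n%:R * pi_factor n = n%:R - 1.
Proof. by move=> n_gt1; rewrite pi_factor_gt1 // mulrC divfK // pnatr_eq0 -lt0n ltnW. Qed.

Lemma pi_factor_succ_le n :
  n.+1%:R * pi_factor n.+1 <= n%:R * pi_factor n + 1.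
Proof.
case: n => [|[|n]]; first by rewrite pi_factor1 mul0r add0r mulr1.
  by rewrite natr_mul_pi_factor // pi_factor1 mulr1; lra.
by rewrite !natr_mul_pi_factor // -[n.+3%:R]natr1; lra.
Qed.

Lemma moment1_ge y : y != [::] -> dimR y * piw R y <= moment 1 y.
Proof.
elim: y => [|[c|] y IH] // _; first by rewrite moment_cons_one piw_cons_one expr1.
rewrite moment_cons_two !expr1 dimR_cons_two piw_cons_two.
have coef_ge0 : 0 <= (weight y)%:R * pi_factor (weight y) by rewrite mulr_ge0 ?pi_factor_ge0.
have IH_scaled : (weight y)%:R * pi_factor (weight y) * (dimR y * piw R y)
                 <= (weight y)%:R * pi_factor (weight y) * moment 1 y.
  have [->|ne_y] := eqVneq y [::]; first by rewrite /weight /= !mul0r.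
  by rewrite ler_wpM2l // IH.
have Dpi_ge0 : 0 <= dimR y * piw R y by rewrite mulr_ge0 ?piw_ge0.
have := ler_wpM2r Dpi_ge0 (pi_factor_succ_le (weight y)).
have r_ge0 : 0 <= r%:R :> R by [].
nra.
Qed.

(* [var_pot y] accumulates [1/n^2] over the leading run of twos of [y], [n]
   being the weight to the right of each of them; the value [5] for [2 1_i]
   absorbs the step from weight 1, where [pi_factor 1 = 1] breaks the pattern
   [(n - 1) / n]. *)
Fixpoint var_pot y : R :=
  match y with
  | None :: y' =>
      if weight y' == 0%N then 0 else if weight y' == 1%N then 5
      else var_pot y' + (weight y')%:R ^-2
  | _ => 0
  end.

Definition moment2_bound y : R :=
  dimR y * piw R y ^+ 2 * (1 + var_pot y / Num.sqrt ((weight y)%:R - 1)).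

Lemma var_pot_ge0 y : 0 <= var_pot y.
Proof.
elim: y => [|[c|] y IH] //=.
by do 2 case: ifP => // _; rewrite addr_ge0 // invr_ge0 exprn_ge0.
Qed.

Lemma moment2_le_cons_two y : (2 <= weight y)%N ->
  moment 2 y <= moment2_bound y -> moment 2 (Two :: y) <= moment2_bound (Two :: y).
Proof.
move=> w_ge2 IH; rewrite moment_cons_two /moment2_bound dimR_cons_two piw_cons_two.
rewrite weight_cons /= ifN ?ifN; try by apply/negP => /eqP; lia.
have w1_gt1 : (1 < (weight y).+1)%N by lia.
rewrite natrD !pi_factor_gt1 // -natr1.
move: IH; rewrite /moment2_bound.
set n := (weight y)%:R; set S := var_pot y; set D := dimR y; set P := piw R y.
have n_ge2 : 2 <= n by rewrite ler_nat.
have [s1E s2E] : Num.sqrt (n - 1) ^+ 2 = n - 1 /\ Num.sqrt (2 + n - 1) ^+ 2 = n + 1.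
  by rewrite !sqr_sqrtr //; lra.
have [s1_gt0 s2_gt0] : 0 < Num.sqrt (n - 1) /\ 0 < Num.sqrt (2 + n - 1).
  by rewrite !sqrtr_gt0; lra.
have key := moment2_step_ineq n_ge2 (var_pot_ge0 y) s1E s2E s1_gt0 s2_gt0.
have rDP_ge0 : 0 <= r%:R * D * P ^+ 2 by rewrite !mulr_ge0 ?ler0n ?exprn_ge0 ?piw_ge0.
have coef_ge0 : 0 <= r%:R * n * ((n - 1) / n) ^+ 2.
  by rewrite mulr_ge0 ?sqr_ge0 // mulr_ge0 ?ler0n //; lra.
move=> /(ler_wpM2l coef_ge0) IH.
apply: (le_trans (lerD IH (lexx _))).
rewrite [leLHS](_ : _ = r%:R * D * P ^+ 2 *
    ((n - 1) ^+ 2 / n * (1 + S / Num.sqrt (n - 1)) + 1)); last by field; lra.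
rewrite [leRHS](_ : _ = r%:R * D * P ^+ 2 *
    (n ^+ 2 / (n + 1) * (1 + (S + n ^-2) / Num.sqrt (2 + n - 1)))); last by field; lra.
exact: ler_wpM2l.
Qed.

Lemma moment2_le y : moment 2 y <= moment2_bound y.
Proof.
elim: y => [|[c|] y IH].
- rewrite /moment2_bound /moment down_nil big_nil piw_nil /=.
  by rewrite mul0r addr0 expr1n !mulr1 ler0n.
- by rewrite moment_cons_one /moment2_bound piw_cons_one /= mul0r addr0 mulr1.
have [w_le1|] := leqP (weight y) 1; last by move=> w_gt1; apply: moment2_le_cons_two.
have [->|ne_y] := eqVneq y [::].
  rewrite moment_cons_two /moment2_bound dimR_cons_two piw_cons_two /weight /dimR /=.
  by rewrite piw_nil pi_factor1 !(mulr0, mul0r, mulr1, add0r, addr0, expr1n).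
have [c ->] : exists c, y = [:: One c].
  by apply: weight_eq1; move: ne_y; rewrite -weight_eq0; lia.
rewrite moment_cons_two moment_cons_one /moment2_bound dimR_cons_two.
rewrite piw_cons_two piw_cons_one /weight /dimR /=.
rewrite piw_nil pi_factor1 pi_factor_gt1 // !addn0 !(mulr1, mul1r, expr1n).
have -> : ((2 + 1)%:R - 1 : R) = 2 by rewrite natrD; lra.
have sqrt2_gt0 : 0 < Num.sqrt 2 :> R by rewrite sqrtr_gt0.
have : 3 <= 5 / Num.sqrt 2 :> R.
  have : Num.sqrt 2 ^+ 2 = 2 :> R by rewrite sqr_sqrtr.
  by rewrite ler_pdivlMr //; nra.
set t := 5 / _ => t_ge3.
have -> : r%:R * 2 * ((2 - 1) / 2) ^+ 2 * (1 + t) = r%:R * (1 + t) / 2 :> R by field.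
have r_ge0 : 0 <= r%:R :> R by [].
by rewrite ler_pdivlMr //; nra.
Qed.

Lemma piw_sq_var_pot_le_cons_two y : (2 <= weight y)%N ->
  piw R y ^+ 2 * (var_pot y + (weight y)%:R^-1) <= 4 / (weight y)%:R ->
  piw R (Two :: y) ^+ 2 * (var_pot (Two :: y) + (weight (Two :: y))%:R^-1)
  <= 4 / (weight (Two :: y))%:R.
Proof.
move=> w_ge2 IH; rewrite piw_cons_two weight_cons /= ifN ?ifN; try by apply/negP => /eqP; lia.
have w1_gt1 : (1 < (weight y).+1)%N by lia.
rewrite pi_factor_gt1 // -natr1 natrD.
move: IH; set n := (weight y)%:R; set S := var_pot y; set P := piw R y => IH.
have n_ge2 : 2 <= n by rewrite ler_nat.
have inv_le : n ^-2 + (2 + n)^-1 <= n^-1.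
  rewrite -subr_ge0 (_ : _ - _ = (n - 2) / (n ^+ 2 * (2 + n))); last by field; lra.
  by rewrite divr_ge0 ?mulr_ge0 ?sqr_ge0; lra.
have c_ge0 : 0 <= (n / (n + 1)) ^+ 2 by rewrite sqr_ge0.
apply: le_trans (_ : (n / (n + 1)) ^+ 2 * (P ^+ 2 * (S + n^-1)) <= _).
  rewrite (_ : n + 1 - 1 = n); last by ring.
  by rewrite exprMn -mulrA ler_wpM2l // ler_wpM2l ?sqr_ge0 // -addrA lerD2l.
apply: le_trans (ler_wpM2l c_ge0 IH) _.
rewrite -subr_ge0 (_ : _ - _ = 4 / ((2 + n) * (n + 1) ^+ 2)); last by field; lra.
by rewrite divr_ge0 ?mulr_ge0 ?sqr_ge0; lra.
Qed.

Lemma piw_sq_var_pot_le y :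
  piw R y ^+ 2 * (var_pot y + (weight y)%:R^-1) <= 4 / (weight y)%:R.
Proof.
elim: y => [|[c|] y IH].
- by rewrite piw_nil /weight /= invr0 add0r !mulr0.
- rewrite piw_cons_one /= add0r ler_wpM2r ?invr_ge0 //.
  by apply: (@le_trans _ _ 1); rewrite ?expr_le1 ?piw_ge0 ?piw_le1 //; lra.
have [w_le1|] := leqP (weight y) 1; last by move=> w_gt1; apply: piw_sq_var_pot_le_cons_two.
have [->|ne_y] := eqVneq y [::].
  rewrite piw_cons_two /weight /= piw_nil pi_factor1 !addn0 mulr1 expr1n add0r mul1r.
  by rewrite ler_pdivlMr // mulVf //; lra.
have [c ->] : exists c, y = [:: One c].
  by apply: weight_eq1; move: ne_y; rewrite -weight_eq0; lia.
rewrite piw_cons_two piw_cons_one /weight /= piw_nil pi_factor_gt1 // !addn0 mulr1.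
by rewrite [leLHS](_ : _ = 4 / (2 + 1)%:R) // natrD; field.
Qed.

Definition var_bound (k : nat) : R := 4 / (k%:R * Num.sqrt (k%:R - 1)).

Lemma moment2_le_var y : moment 2 y <= dimR y * (piw R y ^+ 2 + var_bound (weight y)).
Proof.
apply: le_trans (moment2_le y) _; rewrite /moment2_bound -mulrA ler_wpM2l ?ler0n //.
rewrite mulrDr mulr1 lerD2l /var_bound invfM mulrA mulrA ler_wpM2r ?invr_ge0 ?sqrtr_ge0 //.
apply: le_trans (piw_sq_var_pot_le y); rewrite ler_wpM2l ?sqr_ge0 // lerDl.
by rewrite invr_ge0.
Qed.

Lemma sum_down_sqdev_le y (c : R) : y != [::] -> 0 <= c ->
  \sum_(z <- down y) dimR z * (piw R z - c) ^+ 2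
  <= dimR y * ((piw R y - c) ^+ 2 + var_bound (weight y)).
Proof.
move=> ne_y c_ge0.
have -> : \sum_(z <- down y) dimR z * (piw R z - c) ^+ 2
          = moment 2 y - 2 * c * moment 1 y + c ^+ 2 * \sum_(z <- down y) dimR z.
  rewrite /moment !mulr_sumr -sumrB -big_split /=.
  by apply: eq_bigr => z _; ring.
rewrite sum_dimR_down //.
have two_c_ge0 : 0 <= 2 * c by rewrite mulr_ge0.
have := ler_wpM2l two_c_ge0 (moment1_ge ne_y).
have := moment2_le_var y.
lra.
Qed.

Definition level_sum (m : nat) (F : word r -> R) : R :=
  \sum_(n < m.+1) \sum_(t : n.-tuple (letter r) | weight (t : word r) == m) F t.

Lemma level_sum1 m y F : weight y = m -> (forall t, weight t = m -> t != y -> F t = 0) ->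
  level_sum m F = F y.
Proof.
move=> wy F0; have size_y : (size y < m.+1)%N by rewrite ltnS -wy size_le_weight.
rewrite /level_sum (bigD1 (Ordinal size_y)) //= [X in _ + X]big1 ?addr0 => [|n n_y].
  rewrite (bigD1 (in_tuple y)) ?wy //= [X in _ + X]big1 ?addr0 // => t /andP[/eqP wt t_y].
  by apply: F0 => //; apply: contraNneq t_y => ty; apply/eqP/val_inj.
apply: big1 => t /eqP wt; apply: F0 => //; apply: contraNneq n_y => ty.
by apply/eqP/val_inj; rewrite /= -ty size_tuple.
Qed.

Definition level_paths m y (G : word r -> R) : R :=
  level_sum m (fun t => dimR t * (dr t y)%:R * G t).

Lemma level_paths_down m y G : (m < weight y)%N ->
  level_paths m y G = \sum_(z <- down y) level_paths m z G.
Proof.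
move=> lt_my; rewrite /level_paths /level_sum exchange_big; apply: eq_bigr => n _.
rewrite exchange_big /=; apply: eq_bigr => t /eqP wt.
by rewrite dr_down ?wt // natr_sum mulr_sumr mulr_suml.
Qed.

Lemma level_paths_weight_lt m y G : (weight y < m)%N -> level_paths m y G = 0.
Proof.
move=> lt_ym; rewrite /level_paths /level_sum big1 // => n _.
by rewrite big1 // => t /eqP wt; rewrite dr_weight_gt ?wt // mulr0 mul0r.
Qed.

Lemma level_paths_weight_eq m y G : weight y = m -> level_paths m y G = dimR y * G y.
Proof.
move=> wy; rewrite /level_paths (level_sum1 wy) ?dr_weight_eq ?eqxx ?mulr1 // => t wt ty.
by rewrite dr_weight_eq ?wt // (negbTE ty) mulr0 mul0r.
Qed.

Lemma level_paths_sqdev_le (c : R) m y : 0 <= c -> (m <= weight y)%N ->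
  level_paths m y (fun t => (piw R t - c) ^+ 2)
  <= dimR y * ((piw R y - c) ^+ 2 + \sum_(m.+1 <= k < (weight y).+1) var_bound k).
Proof.
move=> c_ge0; move wd: (weight y - m)%N => d; elim: d y wd => [|d IH] y wd le_my.
  have wy : weight y = m by lia.
  by rewrite level_paths_weight_eq // wy big_geq // addr0.
have ne_y : y != [::] by rewrite -weight_eq0; lia.
rewrite level_paths_down; last by lia.
rewrite big_nat_recr /=; last by lia.
set tail := \sum_(m.+1 <= k < weight y) var_bound k.
apply: le_trans (_ : \sum_(z <- down y) dimR z * ((piw R z - c) ^+ 2 + tail) <= _).
  rewrite !big_seq; apply: ler_sum => z /weight_down wz.
  by rewrite /tail -wz; apply: IH; lia.
rewrite [leLHS](_ : _ = \sum_(z <- down y) dimR z * (piw R z - c) ^+ 2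
                       + (\sum_(z <- down y) dimR z) * tail); last first.
  by rewrite mulr_suml -big_split; apply: eq_bigr => z _ /=; ring.
rewrite sum_dimR_down // (addrC tail) addrA mulrDr lerD2r.
exact: sum_down_sqdev_le.
Qed.

Lemma var_bound_succ_le N : (2 <= N)%N ->
  var_bound N.+1 <= 8 / Num.sqrt (N%:R - 1) - 8 / Num.sqrt (N.+1%:R - 1).
Proof.
move=> N_ge2; rewrite /var_bound -[N.+1%:R]natr1 addrK.
have n_ge2 : 2 <= N%:R :> R by rewrite ler_nat.
set n := N%:R in n_ge2 *.
have [aE bE] : Num.sqrt (n - 1) ^+ 2 = n - 1 /\ Num.sqrt n ^+ 2 = n.
  by rewrite !sqr_sqrtr //; lra.
have [a_gt0 b_gt0] : 0 < Num.sqrt (n - 1) /\ 0 < Num.sqrt n.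
  by rewrite !sqrtr_gt0; lra.
set a := Num.sqrt (n - 1) in aE a_gt0 *; set b := Num.sqrt n in bE b_gt0 *.
have ab : (b - a) * (b + a) = 1 by rewrite -subr_sqr aE bE; ring.
have a_le_b : a <= b by nra.
rewrite -subr_ge0 (_ : _ - _ = (8 * (n + 1) * (b - a) - 4 * a) / ((n + 1) * a * b)).
  by rewrite divr_ge0 ?mulr_ge0; nra.
by field; lra.
Qed.

Lemma sum_var_bound_le m N : (2 <= m)%N ->
  \sum_(m.+1 <= k < N.+1) var_bound k <= 8 / Num.sqrt (m%:R - 1).
Proof.
move=> m_ge2; have [le_mN|lt_Nm] := leqP m N; last first.
  by rewrite big_geq ?divr_ge0 ?sqrtr_ge0 // ltnS ltnW.
pose f k := - (8 / Num.sqrt (k%:R - 1) : R).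
apply: le_trans (_ : \sum_(m <= k < N) (f k.+1 - f k) <= _).
  rewrite big_add1 /= !big_nat ler_sum // => k /andP[m_le_k _].
  by rewrite /f opprK addrC var_bound_succ_le // (leq_trans m_ge2).
rewrite telescope_sumr // /f.
have : 0 <= 8 / Num.sqrt (N%:R - 1) :> R by rewrite divr_ge0 ?sqrtr_ge0.
lra.
Qed.

Definition far_sum m (c eta : R) (F : word r -> R) : R :=
  \sum_(n < m.+1) \sum_(t : n.-tuple (letter r) |
      (weight (t : word r) == m) && ~~ (c - eta < piw R t < c + eta)) F t.

Lemma level_sum_far_le m (c eta : R) (F : word r -> R) : 0 < eta ->
  (forall t, weight t = m -> 0 <= F t) ->
  far_sum m c eta F <= level_sum m (fun t => F t * (piw R t - c) ^+ 2) / eta ^+ 2.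
Proof.
move=> eta_gt0 F_ge0; rewrite /far_sum /level_sum mulr_suml ler_sum // => n _.
rewrite mulr_suml big_mkcondr ler_sum //= => t /eqP wt.
have eta2_gt0 : 0 < eta ^+ 2 by rewrite exprn_gt0.
rewrite ler_pdivlMr //; case: ifP => [far|_]; last first.
  by rewrite mul0r mulr_ge0 ?sqr_ge0 ?F_ge0.
rewrite ler_wpM2l ?F_ge0 //; move: far; rewrite negb_and -!leNgt => far.
have : 0 <= eta by lra.
by case/orP: far => ?; nra.
Qed.

Hypothesis r_gt0 : (0 < r)%N.

Lemma dimR_gt0 y : 0 < dimR y.
Proof. by rewrite ltr0n dimw_gt0. Qed.

Lemma far_mass_le m y (c eta : R) : (2 <= m)%N -> 0 <= c -> 0 < eta ->
  far_sum m c eta (fun t => dimR t * (dr t y)%:R / dimR y)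
  <= ((piw R y - c) ^+ 2 + 8 / Num.sqrt (m%:R - 1)) / eta ^+ 2.
Proof.
move=> m_ge2 c_ge0 eta_gt0.
have Dy_gt0 := dimR_gt0 y.
apply: le_trans (level_sum_far_le c eta_gt0 _) _ => [t _|].
  by rewrite divr_ge0 ?mulr_ge0 ?ler0n // ltW.
rewrite ler_wpM2r ?invr_ge0 ?sqr_ge0 //.
rewrite [leLHS](_ : _ = level_paths m y (fun t => (piw R t - c) ^+ 2) / dimR y); last first.
  rewrite /level_paths /level_sum mulr_suml; apply: eq_bigr => n _.
  by rewrite mulr_suml; apply: eq_bigr => t _; rewrite mulrAC.
rewrite ler_pdivrMr // mulrC.
have [le_my|lt_ym] := leqP m (weight y); last first.
  by rewrite level_paths_weight_lt // mulr_ge0 ?addr_ge0 ?sqr_ge0 ?divr_ge0 ?sqrtr_ge0 // ltW.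
apply: le_trans (level_paths_sqdev_le c_ge0 le_my) _.
by rewrite ler_wpM2l ?(ltW Dy_gt0) // lerD2l sum_var_bound_le.
Qed.

End Walk.

Local Open Scope classical_set_scope.

Lemma cvg_inv_sqrt_pred (R : realType) :
  (fun m : nat => (Num.sqrt (m%:R - 1))^-1 : R) @ \oo --> 0.
Proof.
have sqrt_gt0 : \forall m \near \oo, 0 < Num.sqrt (m%:R - 1) :> R.
  by near=> m; rewrite sqrtr_gt0 subr_gt0 ltr1n; near: m; apply: nbhs_infty_ge.
apply/(gtr0_cvgV0 sqrt_gt0)/cvgryPge => A.
near=> m; apply: le_trans (ler_norm A) _.
rewrite -sqrtr_sqr ler_sqrt ?subr_ge0 ?ler1n; last by near: m; apply: nbhs_infty_ge.
by rewrite lerBrDr; near: m; apply: nbhs_infty_ger.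
Unshelve. all: end_near.
Qed.

Section FarMass.
Variables (R : realType) (r : nat).
Hypothesis r_gt0 : (0 < r)%N.
Variables (c eta : R) (mu : word r -> R) (vs : nat -> word r).
Hypotheses (c_ge0 : 0 <= c) (eta_gt0 : 0 < eta).
Hypothesis piw_vs : (fun n => piw R (vs n)) @ \oo --> c.
Hypothesis mu_vs : forall w : word r,
  (fun n => ((dr [::] w)%:R * (dr w (vs n))%:R / (dr [::] (vs n))%:R : R)) @ \oo --> mu w.

Lemma cvg_far_sum m :
  (fun k => far_sum m c eta (fun t => dimR R t * (dr t (vs k))%:R / dimR R (vs k)))
  @ \oo --> far_sum m c eta mu.
Proof.
apply: cvg_big => [|n _]; first exact: add_continuous.
apply: cvg_big => [|t _]; first exact: add_continuous.
by have := @mu_vs t; under eq_fun do rewrite !dr_nil.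
Qed.

Lemma far_sum_mu_ge0 m : 0 <= far_sum m c eta mu.
Proof.
apply: (ler_cvg_to (cvg_cst _) (@cvg_far_sum m)); near=> k.
apply: sumr_ge0 => n _; apply: sumr_ge0 => t _.
by rewrite divr_ge0 ?mulr_ge0 ?ler0n.
Unshelve. all: end_near.
Qed.

Lemma far_sum_mu_le m : (2 <= m)%N ->
  far_sum m c eta mu <= 8 / Num.sqrt (m%:R - 1) / eta ^+ 2.
Proof.
move=> m_ge2; set K := 8 / Num.sqrt (m%:R - 1).
have cvg_dev : (fun k => piw R (vs k) - c) @ \oo --> 0.
  by rewrite -(subrr c); apply: cvgB piw_vs (cvg_cst _).
have cvg_sq : (fun k => (piw R (vs k) - c) ^+ 2) @ \oo --> 0.
  by under eq_fun do rewrite expr2; rewrite -(mulr0 0); apply: cvgM.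
have cvg_bound : (fun k => ((piw R (vs k) - c) ^+ 2 + K) / eta ^+ 2) @ \oo --> K / eta ^+ 2.
  by rewrite -[K in K / _]add0r; apply: cvgM (cvg_cst _); apply: cvgD cvg_sq (cvg_cst _).
apply: (ler_cvg_to (@cvg_far_sum m) cvg_bound); near=> k.
exact: far_mass_le.
Unshelve. all: end_near.
Qed.

Lemma cvg_far_sum_mu0 : (fun m => far_sum m c eta mu) @ \oo --> 0.
Proof.
apply: (@squeeze_cvgr _ _ _ _ (fun=> 0) (fun m => 8 / eta ^+ 2 * (Num.sqrt (m%:R - 1))^-1)).
- near=> m; rewrite far_sum_mu_ge0 /= mulrAC far_sum_mu_le //.
  by near: m; apply: nbhs_infty_ge.
- exact: cvg_cst.
- rewrite -(mulr0 (8 / eta ^+ 2)); apply: cvgM; [exact: cvg_cst | exact: cvg_inv_sqrt_pred].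
Unshelve. all: end_near.
Qed.

End FarMass.

Theorem mainTheorem2 (R : realType) (r : nat) (v : infword r)
    (beta delta : R) (mu : word r -> R) :
  (2 <= r)%N -> 0 < piInf R v -> 0 < beta <= 1 -> 0 < delta ->
  is_mu v beta mu ->
  (fun m : nat =>
     \sum_(n < m.+1)
       \sum_(t : n.-tuple (letter r) |
               (weight (t : word r) == m) &&
               ~~ (piInf R v * (beta - delta) < piw R (t : word r)
                     < piInf R v * (beta + delta)))
         mu (t : word r))
    @ \oo --> (0 : R).
Proof.
move=> r_ge2 piv_gt0 /andP[beta_gt0 _] delta_gt0 [vs [_ [piw_vs mu_vs]]].
have -> : piInf R v * (beta - delta) = beta * piInf R v - delta * piInf R v by ring.
have -> : piInf R v * (beta + delta) = beta * piInf R v + delta * piInf R v by ring.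
apply: (cvg_far_sum_mu0 (ltnW r_ge2) _ _ piw_vs mu_vs).
- by rewrite mulr_ge0 ?ltW.
- by rewrite mulr_gt0.
Qed.
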